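(* Let $\Sigma$ be a mirror curve of a toric Calabi-Yau threefold, written in the form $1+x+y+\sum_{i=1}^k r_i x^{m_i}y^{n_i}=0$ in $(\mathbb{C}^* )^2$ for some integers $m_i,n_i$ and parameters $r_i$, and for an integer $f$ let $\Sigma_f$ be the framed curve $1+XY^{-f}+Y+\sum_{i=1}^k r_i (XY^{-f})^{m_i}Y^{n_i}=0$ in $(\mathbb{C}^* )^2$. Then there are at most finitely many values of $f$ for which the map $X:\Sigma_f\to\mathbb{C}^*$ fails to be a branched covering; i.e. for generic framing $f$, $X:\Sigma_f\to\mathbb{C}^*$ is a branched covering. *)

From HB Require Import structures.
From mathcomp Require Import all_boot all_order all_algebra.
Set Implicit Arguments. Unset Strict Implicit. Unset Printing Implicit Defensive.
Import Order.TTheory GRing.Theory Num.Theory.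
Local Open Scope ring_scope.

Definition framedPoly (C : numClosedFieldType) (k : nat)
  (r : 'I_k -> C) (m n : 'I_k -> int) (f : int) (X Y : C) : C :=
  1 + X * Y ^ (- f) + Y + \sum_(i < k) r i * (X * Y ^ (- f)) ^ (m i) * Y ^ (n i).

Definition framedCurve (C : numClosedFieldType) (k : nat)
  (r : 'I_k -> C) (m n : 'I_k -> int) (f : int) (X Y : C) : Prop :=
  X != 0 /\ Y != 0 /\ framedPoly r m n f X Y = 0.

(* The projection (X,Y) |-> X from a curve S in (C^x)^2 to C^x is a
   branched covering: it is surjective onto C^x, has finite fibres, and is
   proper (the preimage of every closed annulus a <= |X| <= b, i.e. of every
   compact subset of C^x, stays in a compact subset of (C^x)^2, i.e.
   |Y| is bounded above and away from 0). *)
Definition X_branched_covering (C : numClosedFieldType) (S : C -> C -> Prop)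
  : Prop :=
  [/\ (forall x : C, x != 0 -> exists y, S x y),
      (forall x : C, x != 0 -> exists s : seq C, forall y, S x y <-> y \in s) &
      (forall a b : C, 0 < a -> a <= b ->
         exists M : C, 0 < M /\
           forall x y, S x y -> a <= `|x| <= b -> M^-1 <= `|y| <= M)].

From HB Require Import structures.
From mathcomp Require Import all_boot all_order all_algebra.
From mathcomp Require Import zify.
Set Implicit Arguments. Unset Strict Implicit. Unset Printing Implicit Defensive.
Import Order.TTheory GRing.Theory Num.Theory.
Local Open Scope ring_scope.

(* The framing substitution x = X Y^-f sends the monomial x^m y^n to X^m Y^(n - f m), and
   two distinct exponents (m1, n1), (m2, n2) get the same Y-exponent only if
   f (m2 - m1) = n2 - n1: outside finitely many f all Y-exponents are distinct.  For a
   fixed X != 0 the framed equation reads Y^e q(Y) = 0 with q a polynomial with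
   nonzero constant term and positive degree (the monomials 1 and y keep the distinct
   Y-exponents 0 and 1), which gives surjectivity and finite fibres over C^x.  Properness
   is Cauchy's root bound, applied in Y and in Y^-1, with the coefficients bounded above
   and below uniformly on an annulus a <= |X| <= b. *)

Lemma normrXz (F : numFieldType) (x : F) (z : int) : `|x ^ z| = `|x| ^ z.
Proof. by case: z => n /=; rewrite ?normfV normrX. Qed.

Lemma exprz_le_add_ends (F : numFieldType) (a b t : F) (z : int) :
  0 < a -> a <= t <= b -> t ^ z <= a ^ z + b ^ z.
Proof.
move=> a0 /andP[hat htb]; have t0 := lt_le_trans a0 hat.
have b0 := lt_le_trans t0 htb.
case: z => n.
  apply: (@le_trans _ _ (b ^ Posz n)); last by rewrite lerDr exprz_ge0 ?ltW.
  by rewrite /exprz; apply: lerXn2r; rewrite // nnegrE ltW.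
apply: (@le_trans _ _ (a ^ Negz n)); last by rewrite lerDl exprz_ge0 ?ltW.
rewrite /exprz lef_pV2 ?posrE ?exprn_gt0 //.
by apply: lerXn2r; rewrite // nnegrE ltW.
Qed.

Lemma exprz_ge_inv_add_ends (F : numFieldType) (a b t : F) (z : int) :
  0 < a -> a <= t <= b -> (a ^ (- z) + b ^ (- z))^-1 <= t ^ z.
Proof.
move=> a0 /andP[hat htb]; have t0 := lt_le_trans a0 hat.
have b0 := lt_le_trans t0 htb.
rewrite -[t ^ z]invrK invr_expz lef_pV2 ?posrE ?addr_gt0 ?exprz_gt0 //.
by rewrite exprz_le_add_ends ?hat.
Qed.

Lemma exprz_le_ge1 (F : numFieldType) (t : F) (m n : int) :
  1 <= t -> m <= n -> t ^ m <= t ^ n.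
Proof.
move=> t1 mn; have t0 : 0 < t := lt_le_trans ltr01 t1.
have -> : n = m + Posz `|n - m|%N by lia.
by rewrite expfzDr ?gt_eqF // ler_peMr ?exprz_ge0 ?(ltW t0) // exprn_ege1.
Qed.

Lemma laurent_root_bound (F : numFieldType) (J : finType) (u : J -> F)
    (e : J -> int) (j0 : J) (y : F) :
  u j0 != 0 -> y != 0 -> \sum_j u j * y ^ e j = 0 ->
  (forall j, j != j0 -> u j != 0 -> e j < e j0) ->
  `|y| <= 1 + (\sum_(j | j != j0) `|u j|) / `|u j0|.
Proof.
move=> u0 y0 sum0 e_lt; set S := \sum_(j | _) _.
have S0 : 0 <= S by rewrite sumr_ge0.
have SL0 : 0 <= S / `|u j0| by rewrite divr_ge0.
have [y1|] := boolP (`|y| <= 1); first by rewrite (le_trans y1) ?lerDl.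
rewrite -real_ltNge ?real1 ?normr_real // => y1.
set t := `|y|; set E := e j0.
have t0 : 0 < t := lt_trans ltr01 y1.
have tE1 : 0 < t ^ (E - 1) by rewrite exprz_gt0.
have tE : t ^ E = t * t ^ (E - 1).
  by rewrite -{2}(expr1z t) -expfzDr ?gt_eqF // addrC subrK.
have dominant : `|u j0| * t ^ E <= S * t ^ (E - 1).
  rewrite /t /E -normrXz -normrM; move/eqP: sum0; rewrite (bigD1 j0) //= addr_eq0 => /eqP ->.
  rewrite normrN mulr_suml (le_trans (ler_norm_sum _ _ _)) //.
  apply: ler_sum => j j_ne0; rewrite normrM normrXz.
  have [->|uj0] := eqVneq (u j) 0; first by rewrite normr0 !mul0r.
  rewrite ler_wpM2l // exprz_le_ge1 ?(ltW y1) //.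
  by have := e_lt j j_ne0 uj0; rewrite -/E; lia.
have : `|u j0| * t <= S by rewrite -(ler_pM2r tE1) -mulrA -tE.
rewrite -ler_pdivlMl ?normr_gt0 // mulrC => tS.
by rewrite (le_trans tS) ?lerDr.
Qed.

Lemma laurent_sum_poly (F : fieldType) (J : finType) (u : J -> F) (e : J -> int)
    (e_inj : injective e) (j0 j1 : J) :
  u j0 != 0 -> u j1 != 0 -> e j0 < e j1 -> (forall j, u j != 0 -> e j0 <= e j) ->
  exists q : {poly F}, [/\ q.[0] != 0, (1 < size q)%N &
    forall y, y != 0 -> \sum_j u j * y ^ e j = y ^ e j0 * q.[y]].
Proof.
move=> u0 u1 e01 e0_min.
pose q := \sum_(j | u j != 0) u j *: 'X^`|e j - e j0|.
have coef_q j : u j != 0 -> q`_`|e j - e j0| = u j.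
  move=> uj; rewrite coef_sum (bigD1 j) //= coefZ coefXn eqxx mulr1.
  rewrite big1 ?addr0 // => i /andP[ui ij]; rewrite coefZ coefXn.
  case: eqP => [eq_ij|]; last by rewrite mulr0.
  have := e0_min i ui; have := e0_min j uj => ej ei.
  have /e_inj eij : e i = e j by lia.
  by rewrite eij eqxx in ij.
exists q; split.
- by have := coef_q j0 u0; rewrite subrr horner_coef0 => ->.
- rewrite (@leq_trans `|e j1 - e j0|.+1) //; first by lia.
  rewrite ltnNge; apply/negP => /(nth_default 0); rewrite coef_q //.
  exact/eqP.
- move=> y y0; rewrite (bigID (fun j => u j != 0)) /= [X in _ + X]big1; last first.
    by move=> j /negPn/eqP ->; rewrite mul0r.
  rewrite addr0 horner_sum mulr_sumr; apply: eq_bigr => j uj.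
  rewrite hornerZ hornerXn mulrCA -[y ^+ _]/(y ^ Posz _) -expfzDr //.
  by congr (_ * (_ ^ _)); have := e0_min j uj; lia.
Qed.

Section LaurentCurve.

Variables (C : numClosedFieldType) (J : finType) (c : J -> C) (ex ey : J -> int).
Hypothesis ey_inj : injective ey.
Variables j1 j2 : J.
Hypotheses (j12 : j1 != j2) (c1 : c j1 != 0) (c2 : c j2 != 0).

Definition laurentCurve (x y : C) : Prop :=
  x != 0 /\ y != 0 /\ \sum_j c j * x ^ ex j * y ^ ey j = 0.

Let jmin := [arg min_(j < j1 | c j != 0) ey j]%O.
Let jmax := [arg max_(j > j1 | c j != 0) ey j]%O.

Let jmin_spec : c jmin != 0 /\ forall j, c j != 0 -> ey jmin <= ey j.
Proof. by rewrite /jmin; case: arg_minP. Qed.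

Let jmax_spec : c jmax != 0 /\ forall j, c j != 0 -> ey j <= ey jmax.
Proof. by rewrite /jmax; case: arg_maxP. Qed.

Let ey_min_lt_max : ey jmin < ey jmax.
Proof.
have [_ min_le] := jmin_spec; have [_ le_max] := jmax_spec.
have : ey j1 != ey j2 by apply: contra j12 => /eqP/ey_inj ->.
by have := min_le _ c1; have := min_le _ c2; have := le_max _ c1;
  have := le_max _ c2; lia.
Qed.

Let coefx_neq0 x j : x != 0 -> (c j * x ^ ex j != 0) = (c j != 0).
Proof. by move=> x0; rewrite mulf_eq0 expfz_eq0 (negPf x0) andbF orbF. Qed.

Lemma laurentCurve_fibre x : x != 0 ->
  exists q : {poly C}, (1 < size q)%N /\ forall y, laurentCurve x y <-> root q y.
Proof.
move=> x0; have [cmin min_le] := jmin_spec; have [cmax _] := jmax_spec.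
pose u j := c j * x ^ ex j.
have umin : u jmin != 0 by rewrite /u coefx_neq0.
have umax : u jmax != 0 by rewrite /u coefx_neq0.
have u_min_le j : u j != 0 -> ey jmin <= ey j by rewrite /u coefx_neq0 //; apply: min_le.
have [q [q0 size_q sum_q]] :=
  laurent_sum_poly ey_inj umin umax ey_min_lt_max u_min_le.
exists q; split=> // y; rewrite /laurentCurve.
have [->|y0] := eqVneq y 0; first by rewrite /root (negPf q0); split=> // -[_ []].
rewrite (sum_q y y0); split=> [[_ [_ /eqP]]|/rootP qy].
  by rewrite mulf_eq0 expfz_eq0 (negPf y0) andbF.
by rewrite qy mulr0.
Qed.

Lemma laurentCurve_surj x : x != 0 -> exists y, laurentCurve x y.
Proof.
move=> /laurentCurve_fibre[q [size_q fibre]].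
have [y qy] : exists y, root q y by apply: closed_rootP; rewrite gtn_eqF.
by exists y; apply/fibre.
Qed.

Lemma laurentCurve_finite_fibre x : x != 0 ->
  exists s : seq C, forall y, laurentCurve x y <-> y \in s.
Proof.
move=> /laurentCurve_fibre[q [size_q fibre]].
have [s q_eq] := closed_field_poly_normal q.
have lq : lead_coef q != 0 by rewrite lead_coef_eq0 -size_poly_gt0 ltnW.
by exists s => y; rewrite fibre q_eq rootZ // root_prod_XsubC.
Qed.

(* Bounds on [\sum_j `|c j * x ^ ex j|] and [`|c j * x ^ ex j|] over a <= `|x| <= b. *)
Let coef_sum_ub (a b : C) := \sum_j `|c j| * (a ^ ex j + b ^ ex j).
Let coef_lb (a b : C) j := `|c j| * (a ^ (- ex j) + b ^ (- ex j))^-1.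

Let coef_sum_ub_ge0 (a b : C) : 0 < a -> 0 < b -> 0 <= coef_sum_ub a b.
Proof.
move=> a0 b0; apply: sumr_ge0 => j _.
by rewrite mulr_ge0 ?addr_ge0 ?exprz_ge0 // ltW.
Qed.

Let coef_lb_gt0 (a b : C) j : 0 < a -> 0 < b -> c j != 0 -> 0 < coef_lb a b j.
Proof.
by move=> a0 b0 cj; rewrite mulr_gt0 ?normr_gt0 ?invr_gt0 ?addr_gt0 ?exprz_gt0.
Qed.

Let annulus_root_bound (d : J -> int) (j0 : J) (a b x z : C) :
  c j0 != 0 -> (forall j, j != j0 -> c j != 0 -> d j < d j0) ->
  0 < a -> a <= `|x| <= b -> z != 0 -> \sum_j c j * x ^ ex j * z ^ d j = 0 ->
  `|z| <= 1 + coef_sum_ub a b / coef_lb a b j0.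
Proof.
move=> cj0 d_lt a0 x_ab z0 sum0.
have /andP[ax xb] := x_ab; have b0 := lt_le_trans a0 (le_trans ax xb).
have x0 : x != 0 by rewrite -normr_gt0 (lt_le_trans a0 ax).
have u0 : c j0 * x ^ ex j0 != 0 by rewrite coefx_neq0.
have u_lt j : j != j0 -> c j * x ^ ex j != 0 -> d j < d j0.
  by rewrite coefx_neq0 //; apply: d_lt.
apply: le_trans (laurent_root_bound u0 z0 sum0 u_lt) _; rewrite lerD2l.
have L0 := coef_lb_gt0 a0 b0 cj0.
apply: ler_pM; rewrite ?sumr_ge0 ?invr_ge0 //.
- apply: le_trans (_ : \sum_(j | j != j0) `|c j| * (a ^ ex j + b ^ ex j) <= _).
    apply: ler_sum => j _; rewrite normrM normrXz ler_wpM2l //.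
    exact: exprz_le_add_ends.
  rewrite /coef_sum_ub [X in _ <= X](bigD1 j0) //= lerDr mulr_ge0 //.
  by rewrite addr_ge0 ?exprz_ge0 ?ltW.
- rewrite lef_pV2 ?posrE ?normr_gt0 // normrM normrXz ler_wpM2l //.
  exact: exprz_ge_inv_add_ends.
Qed.

Lemma laurentCurve_proper (a b : C) : 0 < a -> a <= b ->
  exists M : C, 0 < M /\ forall x y, laurentCurve x y -> a <= `|x| <= b -> M^-1 <= `|y| <= M.
Proof.
move=> a0 ab; have [cmin min_le] := jmin_spec; have [cmax le_max] := jmax_spec.
pose M1 := 1 + coef_sum_ub a b / coef_lb a b jmax.
pose M2 := 1 + coef_sum_ub a b / coef_lb a b jmin.
have b0 := lt_le_trans a0 ab.
have M_ge1 j : c j != 0 -> 1 <= 1 + coef_sum_ub a b / coef_lb a b j.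
  by move=> cj; rewrite lerDl divr_ge0 ?coef_sum_ub_ge0 ?ltW ?coef_lb_gt0.
have M1_gt0 : 0 < M1 := lt_le_trans ltr01 (M_ge1 _ cmax).
have M2_gt0 : 0 < M2 := lt_le_trans ltr01 (M_ge1 _ cmin).
have M_gt0 : 0 < M1 + M2 by rewrite addr_gt0.
exists (M1 + M2); split=> // x y [x0 [y0 sum0]] x_ab.
have y_le : `|y| <= M1.
  apply: annulus_root_bound cmax _ a0 x_ab y0 sum0 => j j_ne cj.
  by rewrite lt_neqAle le_max // andbT; apply: contra j_ne => /eqP/ey_inj ->.
have yV_le : `|y^-1| <= M2.
  have sumV0 : \sum_j c j * x ^ ex j * y^-1 ^ (- ey j) = 0.
    by rewrite -[RHS]sum0; apply: eq_bigr => j _; rewrite exprz_inv opprK.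
  apply: annulus_root_bound cmin _ a0 x_ab _ sumV0; last by rewrite invr_eq0.
  move=> j j_ne cj; rewrite ltrN2 lt_neqAle min_le // andbT.
  by apply: contra j_ne => /eqP/ey_inj ->.
apply/andP; split; last by rewrite (le_trans y_le) // lerDl ltW.
rewrite -[`|y|]invrK lef_pV2 ?posrE ?invr_gt0 ?normr_gt0 //.
by rewrite normfV in yV_le; rewrite (le_trans yV_le) // lerDr ltW.
Qed.

Theorem laurentCurve_branched_covering : X_branched_covering laurentCurve.
Proof.
split; [exact: laurentCurve_surj | exact: laurentCurve_finite_fibre |].
by move=> a b; apply: laurentCurve_proper.
Qed.

End LaurentCurve.

Lemma X_branched_covering_ext (C : numClosedFieldType) (S T : C -> C -> Prop) :
  (forall x y, S x y <-> T x y) -> X_branched_covering S -> X_branched_covering T.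
Proof.
move=> ST [surj fibre proper]; split.
- by move=> x /surj[y /ST]; exists y.
- by move=> x /fibre[s Ss]; exists s => y; rewrite -ST.
- move=> a b a0 ab; have [M [M0 HM]] := proper a b a0 ab.
  by exists M; split=> // x y /ST; apply: HM.
Qed.

Lemma framed_exponent_inj (s : seq (int * int)) (f : int) :
  f \notin [seq ((q.2 - p.2) %/ (q.1 - p.1))%Z | p <- s, q <- s] ->
  {in s &, injective (fun p => p.2 - f * p.1)}.
Proof.
move=> f_good [m1 n1] [m2 n2] p1s p2s /= eq_e.
have [m12|] := eqVneq m1 m2; first by congr (_, _); move: eq_e; rewrite m12; lia.
move=> m12; have dm : m2 - m1 != 0 by rewrite subr_eq0 eq_sym.
case/negP: f_good.
have -> : f = ((n2 - n1) %/ (m2 - m1))%Z.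
  have -> : n2 - n1 = f * (m2 - m1) by lia.
  by rewrite mulzK.
exact: (allpairs_f (fun p q => ((q.2 - p.2) %/ (q.1 - p.1))%Z) p1s p2s).
Qed.

Definition base_exponents : seq (int * int) := [:: (0%Z, 0%Z); (1%Z, 0%Z); (0%Z, 1%Z)].

Definition mirror_exponent k (m n : 'I_k -> int) (j : 'I_3 + 'I_k) : int * int :=
  match j with inl i => nth (0%Z, 0%Z) base_exponents i | inr i => (m i, n i) end.

Definition mirror_coef (C : numClosedFieldType) k (r : 'I_k -> C)
    (j : 'I_3 + 'I_k) : C :=
  match j with inl _ => 1 | inr i => r i end.

Lemma mirror_exponent_inj k (m n : 'I_k -> int) :
  injective (fun i : 'I_k => (m i, n i)) ->
  (forall i : 'I_k, (m i, n i) \notin base_exponents) ->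
  injective (mirror_exponent m n).
Proof.
move=> mn_inj mn_new [i|i] [j|j] /=.
- by move/eqP; rewrite nth_uniq // => /eqP/val_inj ->.
- by move=> eq_ij; have := mn_new j; rewrite -eq_ij mem_nth.
- by move=> eq_ij; have := mn_new i; rewrite eq_ij mem_nth.
- by move/mn_inj ->.
Qed.

Lemma framedPoly_laurent (C : numClosedFieldType) k (r : 'I_k -> C)
    (m n : 'I_k -> int) (f : int) (X Y : C) :
  Y != 0 ->
  framedPoly r m n f X Y =
    \sum_j mirror_coef r j * X ^ (mirror_exponent m n j).1
            * Y ^ ((mirror_exponent m n j).2 - f * (mirror_exponent m n j).1).
Proof.
move=> Y0; rewrite /framedPoly big_sumType /= !big_ord_recl big_ord0 /=.
rewrite !mulr0 !subr0 !expr0z !mulr1 !expr1z !addr0 sub0r !mul1r.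
rewrite !addrA; congr (_ + _); apply: eq_bigr => i _.
by rewrite expfzMl exprz_exp -!mulrA -expfzDr // mulNr addrC.
Qed.

Theorem mainTheorem2 (C : numClosedFieldType) (k : nat)
  (r : 'I_k -> C) (m n : 'I_k -> int)
  (Hdistinct : injective (fun i : 'I_k => (m i, n i)))
  (Hnew : forall i : 'I_k,
      (m i, n i) \notin [:: (0%Z, 0%Z); (1%Z, 0%Z); (0%Z, 1%Z)]) :
  exists bad : seq int, forall f : int,
    f \notin bad -> X_branched_covering (framedCurve r m n f).
Proof.
set E := mirror_exponent m n; have E_inj := mirror_exponent_inj Hdistinct Hnew.
exists [seq ((q.2 - p.2) %/ (q.1 - p.1))%Z | p <- codom E, q <- codom E] => f f_good.
have ey_inj : injective (fun j => (E j).2 - f * (E j).1).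
  by move=> i j /(framed_exponent_inj f_good (codom_f E i) (codom_f E j))/E_inj.
have base_neq : inl ord0 != inl ord_max :> 'I_3 + 'I_k by [].
apply: X_branched_covering_ext (laurentCurve_branched_covering
  (c := mirror_coef r) (fun j => (E j).1) ey_inj base_neq (oner_neq0 C) (oner_neq0 C)).
move=> x y; rewrite /framedCurve /laurentCurve.
by split=> -[x0 [y0]]; rewrite framedPoly_laurent.
Qed.
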